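(* Let $G_\bullet/\Gamma$ be a nilmanifold of length $d$ and let $r\le d$. Define $\tilde G_i=G_r$ for $i\le r$ and $\tilde G_i=G_i$ for $i\ge r$, and $\tilde\Gamma=G_r\cap\Gamma$. Let $\iota:G_r/(G_r\cap\Gamma)\to G/\Gamma$ be the inclusion $g(G_r\cap\Gamma)\mapsto g\Gamma$. Then $\bar h\mapsto\iota\circ\bar h$ is a bijection from $\mathrm{poly}(\mathscr F_\emptyset\to\tilde G_\bullet/\tilde\Gamma)$ onto the set of those $\bar f\in\mathrm{poly}(\mathscr F_\emptyset\to G_\bullet/\Gamma)$ which take values in $G_r\Gamma=\{g\Gamma:g\in G_r\}\subset G/\Gamma$.
   Context: $\mathscr F$ is the family of finite non-empty subsets of $\mathbb N=\{1,2,\dots\}$, $\mathscr F_\emptyset=\mathscr F\cup\{\emptyset\}$. A prefiltration $G_\bullet$ on a nilpotent Lie group $G$: Lie subgroups $G=G_0\supseteq G_1\supseteq\cdots$ with $[G_i,G_j]\subseteq G_{i+j}$ and $G_{d+1}=\{e\}$ ($d$ minimal = length); a filtration if also $G_0=G_1=G$; $G_{\bullet+1}$ is $i\mapsto G_{i+1}$. If $\Gamma<G$ is discrete cocompact and each $G_i\cap\Gamma$ is cocompact in $G_i$, $G_\bullet/\Gamma$ is a nilmanifold of length $d$. $g:\mathscr F_\emptyset\to G$ is in $\mathrm{poly}(\mathscr F_\emptyset\to G_\bullet)$ if either $G_0=\{e\}$ and $g\equiv e$, or for each $\beta\in\mathscr F_\emptyset$ there is $D_\beta g\in\mathrm{poly}(\mathscr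 F_\emptyset\to G_{\bullet+1})$ with $D_\beta g(\alpha)=g(\alpha)^{-1}g(\alpha\cup\beta)$ whenever $\alpha\cap\beta=\emptyset$; for a prefiltration $H_\bullet$ with discrete cocompact $\Lambda<H_0$, $\mathrm{poly}(\mathscr F_\emptyset\to H_\bullet/\Lambda)$ consists of the maps $\alpha\mapsto g(\alpha)\Lambda$ with $g\in\mathrm{poly}(\mathscr F_\emptyset\to H_\bullet)$. *)

From Stdlib Require List.
From mathcomp Require Import all_boot.
Set Implicit Arguments. Unset Strict Implicit. Unset Printing Implicit Defensive.

(* F_emptyset : finite subsets of N = {1,2,...}, including the empty set,
   represented canonically as strictly increasing lists of positive naturals. *)
Definition fs_ok (s : seq nat) : bool := sorted ltn s && all (leq 1) s.
Definition FS := {s : seq nat | fs_ok s}.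

Definition fs0 : FS := exist (fun s => is_true (fs_ok s)) [::] isT.

Lemma fsU_ok (a b : FS) :
  fs_ok (sort leq (undup (proj1_sig a ++ proj1_sig b))).
Proof.
rewrite /fs_ok ltn_sorted_uniq_leq sort_uniq undup_uniq (sort_sorted leq_total) /=.
rewrite all_sort; apply/allP => x; rewrite mem_undup mem_cat.
case: a b => [a /andP[_ /allP Ha]] [b /andP[_ /allP Hb]] /= /orP[/Ha|/Hb] //.
Qed.

Definition fsU (a b : FS) : FS := exist (fun s => is_true (fs_ok s)) _ (fsU_ok a b).
Definition fs_mem (x : nat) (a : FS) : bool := x \in proj1_sig a.
Definition fs_disjoint (a b : FS) : Prop :=
  forall x, fs_mem x a -> fs_mem x b -> False.

Record group := Group {
  gT :> Type;
  gmul : gT -> gT -> gT;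
  ginv : gT -> gT;
  gone : gT;
  gmulA : forall x y z, gmul x (gmul y z) = gmul (gmul x y) z;
  gmul1 : forall x, gmul gone x = x;
  gmulV : forall x, gmul (ginv x) x = gone
}.

Section GroupDefs.
Variable G : group.
Local Notation "x * y" := (gmul x y).
Local Notation "x ^-1" := (ginv x).
Local Notation e := (gone G).

Definition is_subgroup (H : G -> Prop) : Prop :=
  H e /\ (forall x y, H x -> H y -> H (x * y)) /\ (forall x, H x -> H (x^-1)).

Definition commutator (x y : G) : G := x^-1 * y^-1 * x * y.

Definition prefiltration (Gs : nat -> G -> Prop) : Prop :=
  (forall x, Gs 0 x) /\
  (forall i, is_subgroup (Gs i)) /\
  (forall i x, Gs i.+1 x -> Gs i x) /\
  (forall i j x y, Gs i x -> Gs j y -> Gs (i + j) (commutator x y)).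

Definition prefiltration_length (Gs : nat -> G -> Prop) (d : nat) : Prop :=
  (forall x, Gs d.+1 x -> x = e) /\
  (forall k, k < d -> exists x, Gs k.+1 x /\ x <> e).

(* poly(F_∅ -> H_•) where H_• = Hs is a prefiltration on the group Hs 0
   (a map F_∅ -> H_0); defined inductively (least fixed point). *)
Inductive poly : (nat -> G -> Prop) -> (FS -> G) -> Prop :=
| poly_triv (Hs : nat -> G -> Prop) (g : FS -> G) :
    (forall x, Hs 0 x <-> x = e) -> (forall a, g a = e) -> poly Hs g
| poly_step (Hs : nat -> G -> Prop) (g : FS -> G) :
    (forall a, Hs 0 (g a)) ->
    (forall b, exists Dg : FS -> G,
        poly (fun i => Hs i.+1) Dg /\
        forall a, fs_disjoint a b -> Dg a = (g a)^-1 * g (fsU a b)) ->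
    poly Hs g.

(* points of the homogeneous space: left coset g Λ, as a subset of G *)
Definition coset (L : G -> Prop) (g : G) : G -> Prop :=
  fun x => exists l, L l /\ x = g * l.

Definition poly_quot (Hs : nat -> G -> Prop) (L : G -> Prop)
  (fbar : FS -> (G -> Prop)) : Prop :=
  exists g, poly Hs g /\ forall a, fbar a = coset L (g a).

(* the map G_r/(G_r ∩ Γ) -> G/Γ, g(G_r∩Γ) ↦ gΓ, on cosets viewed as sets *)
Definition coset_incl (Gam : G -> Prop) (c : G -> Prop) : G -> Prop :=
  fun x => exists y, c y /\ coset Gam y x.

Definition topology (opens : (G -> Prop) -> Prop) : Prop :=
  opens (fun _ => True) /\ opens (fun _ => False) /\
  (forall U V, opens U -> opens V -> opens (fun x => U x /\ V x)) /\
  (forall (I : Type) (U : I -> G -> Prop), (forall i, opens (U i)) ->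
     opens (fun x => exists i, U i x)).

Definition hausdorff (opens : (G -> Prop) -> Prop) : Prop :=
  forall x y, x <> y -> exists U V, opens U /\ opens V /\ U x /\ V y /\
    forall z, U z -> V z -> False.

Definition topological_group (opens : (G -> Prop) -> Prop) : Prop :=
  topology opens /\ hausdorff opens /\
  (forall W x y, opens W -> W (x * y) ->
     exists U V, opens U /\ opens V /\ U x /\ V y /\
       forall u v, U u -> V v -> W (u * v)) /\
  (forall W x, opens W -> W (x^-1) ->
     exists U, opens U /\ U x /\ forall u, U u -> W (u^-1)).

Definition compact (opens : (G -> Prop) -> Prop) (K : G -> Prop) : Prop :=
  forall (I : Type) (U : I -> G -> Prop), (forall i, opens (U i)) ->
    (forall x, K x -> exists i, U i x) ->
    exists l : list I, forall x, K x -> exists i, List.In i l /\ U i x.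

Definition discrete_subset (opens : (G -> Prop) -> Prop) (L : G -> Prop) : Prop :=
  forall l, L l -> exists U, opens U /\ U l /\ forall y, U y -> L y -> y = l.

Definition cocompact_in (opens : (G -> Prop) -> Prop) (H L : G -> Prop) : Prop :=
  (forall l, L l -> H l) /\
  exists K, compact opens K /\ (forall k, K k -> H k) /\
    forall h, H h -> exists k l, K k /\ L l /\ h = k * l.

Definition nilmanifold (opens : (G -> Prop) -> Prop) (Gs : nat -> G -> Prop)
  (Gam : G -> Prop) : Prop :=
  topological_group opens /\ prefiltration Gs /\
  is_subgroup Gam /\ discrete_subset opens Gam /\
  cocompact_in opens (fun _ => True) Gam /\
  (forall i, cocompact_in opens (Gs i) (fun x => Gs i x /\ Gam x)).

End GroupDefs.

From mathcomp Require Import all_boot.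
From Stdlib Require Import FunctionalExtensionality PropExtensionality IndefiniteDescription.
Set Implicit Arguments. Unset Strict Implicit. Unset Printing Implicit Defensive.

(* Since G~_i = G_i ∩ G_r, polynomial maps into G~_• are exactly the
   polynomial maps into G_• with values in G_r (their derivatives then lie in
   G_r too).  Injectivity is then coset arithmetic: g1 Γ = g2 Γ with g1, g2 in
   G_r gives g1^-1 g2 in G_r ∩ Γ.  For surjectivity, a lift f of f̄ takes
   values in G_r Γ and is corrected by a polynomial ρ with values in Γ such
   that f ρ takes values in G_r.  This goes by descending induction on the
   filtration degree: the derivative of f at {n} is corrected by some ρ_n one
   degree higher, and ρ(α) is the product, over n in α in decreasing order, of
   ρ_n(α ∩ [1, n)), which telescopes.  That ρ and f ρ are polynomial rests on
   polynomial maps forming a group, which follows from the Leibniz rules for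
   derivatives of products and commutators. *)

Local Notation "x ** y" := (gmul x y) (at level 40, left associativity).
Local Notation "x ^-1" := (ginv x).

Section Group.
Variable G : group.
Implicit Types (x y z : G) (L : G -> Prop) (Hs : nat -> G -> Prop) (g : FS -> G).
Local Notation e := (gone G).

Lemma gmulA_r x y z : x ** y ** z = x ** (y ** z). Proof. by rewrite gmulA. Qed.

Lemma gmulgV x : x ** x^-1 = e.
Proof.
have idem_unit y : y ** y = y -> y = e.
  move=> yy; have : y^-1 ** (y ** y) = y^-1 ** y by rewrite yy.
  by rewrite gmulA gmulV gmul1.
by apply: idem_unit; rewrite -gmulA [x^-1 ** _]gmulA gmulV gmul1.
Qed.

Lemma gmulg1 x : x ** e = x.
Proof. by rewrite -(gmulV x) gmulA gmulgV gmul1. Qed.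

Lemma gmulKg x y : x^-1 ** (x ** y) = y.
Proof. by rewrite gmulA gmulV gmul1. Qed.

Lemma gmulKVg x y : x ** (x^-1 ** y) = y.
Proof. by rewrite gmulA gmulgV gmul1. Qed.

Lemma ginv_uniq x y : x ** y = e -> x^-1 = y.
Proof. by move=> xy; rewrite -(gmulg1 x^-1) -xy gmulKg. Qed.

Lemma ginvK x : x^-1^-1 = x.
Proof. exact/ginv_uniq/gmulV. Qed.

Lemma ginvM x y : (x ** y)^-1 = y^-1 ** x^-1.
Proof. by apply: ginv_uniq; rewrite gmulA_r gmulKVg gmulgV. Qed.

Lemma ginv1 : e^-1 = e.
Proof. exact/ginv_uniq/gmul1. Qed.

Lemma coset_refl L x : L e -> coset L x x.
Proof. by move=> L1; exists e; rewrite gmulg1. Qed.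

Lemma coset_mulr L x l : is_subgroup L -> L l -> coset L (x ** l) = coset L x.
Proof.
move=> [_ [mulL invL]] Ll; apply: functional_extensionality => y.
apply: propositional_extensionality; split=> -[l' [Ll' ->]].
- by exists (l ** l'); split; [exact: mulL | rewrite gmulA].
- by exists (l^-1 ** l'); split; [apply: mulL; first exact: invL | rewrite gmulA_r gmulKVg].
Qed.

Lemma coset_incl_coset Gam L x : is_subgroup Gam -> L e -> (forall l, L l -> Gam l) ->
  coset_incl Gam (coset L x) = coset Gam x.
Proof.
move=> [_ [mulGam _]] L1 subL; apply: functional_extensionality => y.
apply: propositional_extensionality; split.
- move=> [_ [[l [Ll ->]] [l' [Gl' ->]]]].
  by exists (l ** l'); split; [exact: mulGam (subL _ Ll) Gl' | rewrite gmulA].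
- by move=> xGy; exists x; split; first exact: coset_refl.
Qed.

Lemma coset_inj L x y : L e -> coset L x = coset L y -> L (x^-1 ** y).
Proof.
move=> L1 Exy; have [l [Ll ->]] : coset L x y by rewrite Exy; exact: coset_refl.
by rewrite gmulKg.
Qed.

Lemma shift_succ Hs k : (fun i => Hs (k + i.+1)) = (fun i => Hs (k.+1 + i)).
Proof. by apply: functional_extensionality => i; rewrite addSnnS. Qed.

Lemma poly_cases Hs g : poly Hs g ->
  ((forall x, Hs 0 x <-> x = e) /\ (forall a, g a = e)) \/
  ((forall a, Hs 0 (g a)) /\ forall b, exists D, poly (fun i => Hs i.+1) D /\
     forall a, fs_disjoint a b -> D a = (g a)^-1 ** g (fsU a b)).
Proof. by case=> {}Hs {}g H1 H2; [left | right]. Qed.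

Lemma poly_val Hs g a : poly Hs g -> Hs 0 (g a).
Proof. by case/poly_cases=> [[Hs0 ->] | [Hg _]]; [apply/Hs0 | apply: Hg]. Qed.

End Group.

Ltac gnorm := repeat progress rewrite ?gmulA_r ?ginvM ?ginvK ?ginv1 ?gmul1 ?gmulg1
  ?gmulV ?gmulgV ?gmulKg ?gmulKVg.

Section FiniteSets.
Implicit Types (a b c : FS) (X : pred nat) (n x : nat).

Lemma fs_ext a b : (forall x, fs_mem x a = fs_mem x b) -> a = b.
Proof.
move: a b => [s s_ok] [t t_ok]; rewrite /fs_mem /= => Est.
have Est' : s = t.
  apply: (irr_sorted_eq ltn_trans ltnn _ _ Est).
  - by case/andP: s_ok.
  - by case/andP: t_ok.
by subst t; congr exist; exact: bool_irrelevance.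
Qed.

Lemma fs_memU x a b : fs_mem x (fsU a b) = fs_mem x a || fs_mem x b.
Proof. by rewrite /fs_mem /fsU /= mem_sort mem_undup mem_cat. Qed.

Lemma fs_mem0 x : fs_mem x fs0 = false. Proof. by []. Qed.

Lemma fs_mem_pos x a : fs_mem x a -> 0 < x.
Proof. by case: a => s /= /andP[_ /allP pos_s] /pos_s. Qed.

Lemma fs_disjP a b : fs_disjoint a b <-> (forall x, fs_mem x a -> fs_mem x b = false).
Proof.
split=> ab x; last by move=> xa; rewrite ab.
by move=> xa; apply/negP => xb; exact: ab x xa xb.
Qed.

Lemma fs_filter_ok X a : fs_ok (filter X (proj1_sig a)).
Proof.
case: a => s /andP[sorted_s /allP pos_s] /=.
rewrite /fs_ok (sorted_filter ltn_trans) //=.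
by apply/allP => x; rewrite mem_filter => /andP[_ /pos_s].
Qed.

Definition fs_filter X a : FS := exist (fun s => is_true (fs_ok s)) _ (fs_filter_ok X a).

Lemma fs_mem_filter x X a : fs_mem x (fs_filter X a) = X x && fs_mem x a.
Proof. by rewrite /fs_mem /= mem_filter. Qed.

Lemma fs1_ok n : fs_ok (if 0 < n then [:: n] else [::]).
Proof. by case: n. Qed.

Definition fs1 n : FS := exist (fun s => is_true (fs_ok s)) _ (fs1_ok n).

Lemma fs_mem1 x n : fs_mem x (fs1 n) = (0 < n) && (x == n).
Proof. by rewrite /fs_mem /=; case: n => //= n; rewrite inE. Qed.

Definition fs_capU X c a : FS := fsU (fs_filter X a) c.

Lemma fs_mem_capU x X c a : fs_mem x (fs_capU X c a) = X x && fs_mem x a || fs_mem x c.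
Proof. by rewrite /fs_capU fs_memU fs_mem_filter. Qed.

Lemma fs_capU_disjoint X c a b : fs_disjoint a b ->
  fs_disjoint (fs_capU X c a) (fs_filter (fun x => X x && ~~ fs_mem x c) b).
Proof.
move/fs_disjP=> ab; apply/fs_disjP => x; rewrite fs_mem_capU fs_mem_filter.
case: (fs_mem x c); first by rewrite andbF.
by rewrite orbF => /andP[_ /ab ->]; rewrite !andbF.
Qed.

Lemma fsU_capU X c a b :
  fsU (fs_capU X c a) (fs_filter (fun x => X x && ~~ fs_mem x c) b) = fs_capU X c (fsU a b).
Proof.
apply: fs_ext => x; rewrite fs_memU !fs_mem_capU fs_mem_filter fs_memU.
by case: (X x); case: (fs_mem x a); case: (fs_mem x b); case: (fs_mem x c).
Qed.

Lemma fs_capU0_id X a : (forall x, fs_mem x a -> X x) -> fs_capU X fs0 a = a.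
Proof.
move=> aX; apply: fs_ext => x; rewrite fs_mem_capU fs_mem0 orbF.
by case xa: (fs_mem x a); rewrite ?andbF ?aX.
Qed.

Lemma fs_capU0_U X a b : fs_capU X fs0 (fsU a b) = fs_capU X (fs_capU X fs0 b) a.
Proof.
apply: fs_ext => x; rewrite !fs_mem_capU fs_memU fs_mem0.
by case: (X x); case: (fs_mem x a); case: (fs_mem x b).
Qed.

Lemma fs_disjoint_capC a b : fs_disjoint (fs_capU (fun x => ~~ fs_mem x b) fs0 a) b.
Proof.
apply/fs_disjP => x; rewrite fs_mem_capU fs_mem0 orbF => /andP[xb _].
exact: negbTE.
Qed.

Lemma fs_capC_id a b : fs_disjoint a b -> fs_capU (fun x => ~~ fs_mem x b) fs0 a = a.
Proof. by move/fs_disjP=> ab; apply: fs_capU0_id => x /ab ->. Qed.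

Lemma fs_disjoint1 n a : fs_mem n a = false -> fs_disjoint a (fs1 n).
Proof.
move=> na; apply/fs_disjP => x xa; rewrite fs_mem1.
by apply/negP => /andP[_ /eqP xn]; rewrite -xn xa in na.
Qed.

Definition fs_below n a : FS := fs_capU (fun x => x < n) fs0 a.

Lemma fs_below1 a : fs_below 1 a = fs0.
Proof.
apply: fs_ext => x; rewrite /fs_below fs_mem_capU fs_mem0 orbF.
by case xa: (fs_mem x a); rewrite ?andbF // ltnNge (fs_mem_pos xa).
Qed.

Lemma fs_belowS n a : fs_below n.+2 a =
  if fs_mem n.+1 a then fsU (fs_below n.+1 a) (fs1 n.+1) else fs_below n.+1 a.
Proof.
apply: fs_ext => x; case: ifP => na;
  rewrite /fs_below !fs_mem_capU ?fs_memU ?fs_mem_capU ?fs_mem1 fs_mem0 !orbF ltnS leq_eqVlt.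
all: by case: (x =P n.+1) => [-> | _] /=; rewrite ?na ?ltnn ?fs_mem_filter ?orbT ?orbF.
Qed.

Lemma fs_below_notin n a : fs_mem n (fs_below n a) = false.
Proof. by rewrite /fs_below fs_mem_capU fs_mem0 ltnn. Qed.

Definition fs_le a n := all (fun x => x <= n) (proj1_sig a).
Definition fs_max a := foldr maxn 0 (proj1_sig a).

Lemma fs_leP a n : fs_le a n <-> (forall x, fs_mem x a -> x <= n).
Proof. by split=> [/allP | /allP]. Qed.

Lemma fs_le_max a : fs_le a (fs_max a).
Proof.
apply/fs_leP; rewrite /fs_mem /fs_max; case: a => s _ /=.
elim: s => //= y s IHs x; rewrite inE => /orP[/eqP-> | /IHs]; first exact: leq_maxl.
by move/leq_trans; apply; exact: leq_maxr.
Qed.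

Lemma fs_max_le a n : fs_le a n -> fs_max a <= n.
Proof.
rewrite /fs_le /fs_max; case: a => s _ /=.
by elim: s => //= y s IHs /andP[yn sn]; rewrite geq_max yn IHs.
Qed.

Lemma fs_below_max a : fs_below (fs_max a).+1 a = a.
Proof. by apply: fs_capU0_id => x; move/fs_leP: (fs_le_max a) => /[apply]. Qed.

Lemma fs_le_trans a n m : n <= m -> fs_le a n -> fs_le a m.
Proof. by move=> nm /fs_leP an; apply/fs_leP => x /an /leq_trans; apply. Qed.

Lemma fs_leU a b n : fs_le a n -> fs_le b n -> fs_le (fsU a b) n.
Proof.
move=> /fs_leP an /fs_leP bn; apply/fs_leP => x.
by rewrite fs_memU => /orP[/an | /bn].
Qed.

Lemma fs_le_capU X c a n : fs_le a n -> fs_le c n -> fs_le (fs_capU X c a) n.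
Proof.
move=> /fs_leP an /fs_leP cn; apply/fs_leP => x.
by rewrite fs_mem_capU => /orP[/andP[_ /an] | /cn].
Qed.

End FiniteSets.

Lemma nat_ind_down d (R : nat -> Prop) :
  (forall k, d < k -> R k) ->
  (forall k, k <= d -> (forall k', k < k' -> R k') -> R k) -> forall k, R k.
Proof.
move=> Rtop Rstep; suff Rn n k : d < n + k -> R k.
  by move=> k; apply: (Rn d.+1 k); rewrite ltn_addr.
elim: n k => [|n IHn] k dnk; first exact: Rtop.
have [dk | kd] := ltnP d k; first exact: Rtop.
apply: Rstep => // k' kk'; apply: IHn.
by apply: leq_trans dnk _; rewrite addSnnS leq_add2l.
Qed.

Section OrderedProducts.
Variable G : group.
Local Notation e := (gone G).
Implicit Types (u : nat -> FS -> G) (a : FS).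

Fixpoint gprod_down (w : nat -> FS -> G) n a : G :=
  if n is m.+1 then w m.+1 a ** gprod_down w m a else e.

Definition fs_factor n (v : FS -> G) a : G := if fs_mem n a then v (fs_below n a) else e.

Definition ordered_prod u a : G := gprod_down (fun n => fs_factor n (u n)) (fs_max a) a.

Lemma gprod_down_factor_stable u a m n : fs_le a m -> m <= n ->
  gprod_down (fun n => fs_factor n (u n)) n a = gprod_down (fun n => fs_factor n (u n)) m a.
Proof.
move=> am; elim: n => [|n IHn] mn; first by move: mn; rewrite leqn0 => /eqP->.
have [mSn | nm] := ltnP m n.+1; last by have -> : n.+1 = m by apply/eqP; rewrite eqn_leq nm mn.
rewrite /= -IHn // /fs_factor.
have -> : fs_mem n.+1 a = false.
  by apply/negP => /(fs_leP a m).1 - /(_ am); rewrite leqNgt mSn.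
by rewrite gmul1.
Qed.

Lemma ordered_prod_mem (N : G -> Prop) u a :
  is_subgroup N -> (forall n x, N (u n x)) -> N (ordered_prod u a).
Proof.
move=> [N1 [mulN _]] Nu; rewrite /ordered_prod; elim: (fs_max a) => //= n IHn.
by apply: mulN => //; rewrite /fs_factor; case: ifP.
Qed.

Lemma ordered_prod_telescope (N : G -> Prop) (f : FS -> G) u :
  is_subgroup N -> (forall x y, N x -> N (y^-1 ** x ** y)) ->
  (forall n x, fs_mem n x = false -> N ((f x)^-1 ** f (fsU x (fs1 n)) ** u n x)) ->
  forall a, N (f a ** ordered_prod u a ** (f fs0)^-1).
Proof.
move=> [N1 [mulN _]] conjN jumpN a.
suff telescope n : N (f (fs_below n.+1 a) **
    gprod_down (fun n => fs_factor n (u n)) n a ** (f fs0)^-1).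
  by have := telescope (fs_max a); rewrite fs_below_max.
elim: n => [|n IHn] /=; first by rewrite fs_below1 gmulg1 gmulgV.
rewrite fs_belowS /fs_factor; case: ifP => na; last by rewrite gmul1.
set x := fs_below n.+1 a in IHn *.
have jump := jumpN n.+1 x (fs_below_notin _ _).
set m := (f x)^-1 ** f (fsU x (fs1 n.+1)) ** u n.+1 x in jump.
have -> : f (fsU x (fs1 n.+1)) ** (u n.+1 x ** gprod_down (fun n => fs_factor n (u n)) n a)
    ** (f fs0)^-1 = ((f x)^-1^-1 ** m ** (f x)^-1) **
    (f x ** gprod_down (fun n => fs_factor n (u n)) n a ** (f fs0)^-1).
  by rewrite /m; gnorm.
by apply: mulN; [exact: conjN | exact: IHn].
Qed.

End OrderedProducts.

Section PolynomialMaps.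
Variables (G : group) (Gs : nat -> G -> Prop) (d : nat).
Hypothesis filtG : prefiltration Gs.
Hypothesis Gs_trivial : forall x, Gs d.+1 x -> x = gone G.
Local Notation e := (gone G).
Implicit Types (x y : G) (f g : FS -> G).

Lemma Gs0 x : Gs 0 x. Proof. by case: filtG => H _; apply: H. Qed.
Lemma Gs1 i : Gs i e. Proof. by case: filtG => _ [H _]; case: (H i). Qed.

Lemma Gs_mul i x y : Gs i x -> Gs i y -> Gs i (x ** y).
Proof. by case: filtG => _ [H _]; case: (H i) => _ [mulGi _]; apply: mulGi. Qed.

Lemma Gs_inv i x : Gs i x -> Gs i x^-1.
Proof. by case: filtG => _ [H _]; case: (H i) => _ [_ invGi]; apply: invGi. Qed.

Lemma Gs_comm i j x y : Gs i x -> Gs j y -> Gs (i + j) (commutator x y).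
Proof. by case: filtG => _ [_ [_ H]]; apply: H. Qed.

Lemma Gs_mono i j x : i <= j -> Gs j x -> Gs i x.
Proof.
move=> ij; rewrite -(subnKC ij); elim: (j - i) => [|n IHn]; first by rewrite addn0.
by move=> Gx; apply: IHn; case: filtG => _ [_ [GsS _]]; apply: GsS; rewrite -addnS.
Qed.

Lemma Gs_conj i x y : Gs i x -> Gs i (y^-1 ** x ** y).
Proof.
move=> Gx; have := Gs_comm Gx (Gs0 y); rewrite addn0 => Gxy.
have -> : y^-1 ** x ** y = x ** commutator x y by rewrite /commutator; gnorm.
exact: Gs_mul.
Qed.

Lemma Gs_above k x : d < k -> Gs k x -> x = e.
Proof. by move=> dk /(Gs_mono dk); exact: Gs_trivial. Qed.

Definition poly_sh k g := poly (fun i => Gs (k + i)) g.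

Lemma poly_sh_intro k g : (forall a, Gs k (g a)) ->
  (forall b, exists D, poly_sh k.+1 D /\
     forall a, fs_disjoint a b -> D a = (g a)^-1 ** g (fsU a b)) ->
  poly_sh k g.
Proof.
move=> Gg Dg; apply: poly_step => [a | b]; first by rewrite addn0.
by have [D DP] := Dg b; exists D; rewrite shift_succ.
Qed.

Lemma poly_sh_const k c : Gs k c -> poly_sh k (fun _ => c).
Proof.
elim/(nat_ind_down (d := d)): k c => [k dk | k _ IHk] c Gc.
  apply: poly_triv => [x | a]; last exact: Gs_above dk Gc.
  by rewrite addn0; split=> [/(Gs_above dk) | ->] //; exact: Gs1.
apply: poly_sh_intro => // b; exists (fun _ => e); split; first exact/IHk/Gs1.
by move=> a _; rewrite gmulV.
Qed.

Lemma poly_sh_unit k g : (forall a, g a = e) -> poly_sh k g.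
Proof.
by move=> ge; rewrite (functional_extensionality _ _ ge); exact/poly_sh_const/Gs1.
Qed.

Lemma poly_sh_val k g a : poly_sh k g -> Gs k (g a).
Proof. by move/(poly_val a); rewrite addn0. Qed.

Lemma poly_sh_above k g a : d < k -> poly_sh k g -> g a = e.
Proof. by move=> dk /(poly_sh_val a); exact: Gs_above. Qed.

Lemma poly_sh_derivative k g : poly_sh k g -> forall b, exists D, poly_sh k.+1 D /\
  forall a, fs_disjoint a b -> D a = (g a)^-1 ** g (fsU a b).
Proof.
case/poly_cases=> [[_ ge] | [_ Dg]] b.
  exists (fun _ => e); split; first exact/poly_sh_const/Gs1.
  by move=> a _; rewrite !ge gmulV.
by have [D DP] := Dg b; exists D; rewrite /poly_sh -shift_succ.
Qed.

Lemma poly_sh_of_poly k Hs g :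
  (forall i x, Hs i x -> Gs (k + i) x) -> poly Hs g -> poly_sh k g.
Proof.
elim/(nat_ind_down (d := d)): k Hs g => [k dk | k _ IHk] Hs g HsGs gP.
  apply: poly_sh_unit => a; apply: (Gs_above dk).
  by have := HsGs 0 _ (poly_val a gP); rewrite addn0.
case/poly_cases: gP => [[_ ge] | [Hg Dg]]; first exact: poly_sh_unit.
apply: poly_sh_intro => [a | b]; first by have := HsGs 0 _ (Hg a); rewrite addn0.
have [D [DP DE]] := Dg b; exists D; split => //.
by apply: (IHk k.+1 (ltnSn k) _ _ _ DP) => i x /HsGs; rewrite addSnnS.
Qed.

Definition fmul f g a : G := f a ** g a.
Definition fcomm f g a : G := commutator (f a) (g a).
Definition fconj f g : FS -> G := fmul f (fcomm f g).

(* The derivative of a commutator involves commutators of derivatives, so the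
   closure of [poly_sh] under products is proved for the class generated by
   products and commutators, whose derivatives can be computed structurally. *)
Inductive poly_expr : nat -> (FS -> G) -> Prop :=
| poly_expr_poly k g : poly_sh k g -> poly_expr k g
| poly_expr_mul k f g : poly_expr k f -> poly_expr k g -> poly_expr k (fmul f g)
| poly_expr_comm i j f g : poly_expr i f -> poly_expr j g -> poly_expr (i + j) (fcomm f g)
| poly_expr_mono k k' g : k' <= k -> poly_expr k g -> poly_expr k' g.

Lemma poly_expr_conj k l f g : poly_expr k f -> poly_expr l g -> poly_expr k (fconj f g).
Proof.
move=> fP gP.
exact: poly_expr_mul fP (poly_expr_mono (leq_addr l k) (poly_expr_comm fP gP)).
Qed.

Lemma poly_expr_val k g a : poly_expr k g -> Gs k (g a).
Proof.
elim=> {k g} [k g /poly_sh_val // | k f g _ Gf _ Gg | i j f g _ Gf _ Gg | k k' g k'k _ Gg].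
- exact: Gs_mul.
- exact: Gs_comm.
- exact: Gs_mono k'k Gg.
Qed.

Lemma poly_expr_derivative k g : poly_expr k g -> forall b, exists D, poly_expr k.+1 D /\
  forall a, fs_disjoint a b -> D a = (g a)^-1 ** g (fsU a b).
Proof.
elim=> {k g} [k g gP | k f g fP Df gP Dg | i j f g fP Df gP Dg | k k' g k'k _ Dg] b.
- have [D [DP DE]] := poly_sh_derivative gP b.
  by exists D; split => //; exact: poly_expr_poly.
- have [A [AP AE]] := Df b; have [B [BP BE]] := Dg b.
  exists (fmul (fconj A g) B); split.
    by apply: poly_expr_mul BP; apply: poly_expr_conj AP gP.
  by move=> a ab; rewrite /fconj /fmul /fcomm AE // BE // /commutator; gnorm.
- have [A [AP AE]] := Df b; have [B [BP BE]] := Dg b.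
  have fgP : poly_expr (i + j) (fcomm f g) by exact: poly_expr_comm.
  (* [f A, g B] expanded with [uv, w] = [u, w]^v [v, w] and [u, vw] = [u, w] [u, v]^w *)
  exists (fmul (fmul (fmul (fmul
     (fconj (fconj (fcomm f B) A) (fcomm f g))
     (fcomm (fcomm f g) A))
     (fconj (fcomm (fcomm f g) B) A))
     (fcomm A B))
     (fconj (fcomm A g) B)); split.
    apply: poly_expr_mul; [apply: poly_expr_mul; [apply: poly_expr_mul;
      [apply: poly_expr_mul|]|]|].
    + apply: poly_expr_conj fgP; apply: poly_expr_conj AP.
      apply: (poly_expr_mono (k := i + j.+1)); first by rewrite addnS.
      exact: poly_expr_comm.
    + apply: (poly_expr_mono (k := i + j + i.+1)); first by rewrite addnS ltnS leq_addr.
      exact: poly_expr_comm.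
    + apply: poly_expr_conj AP.
      apply: (poly_expr_mono (k := i + j + j.+1)); first by rewrite addnS ltnS leq_addr.
      exact: poly_expr_comm.
    + apply: (poly_expr_mono (k := i.+1 + j.+1)); first by rewrite addSn ltnS leq_add2l.
      exact: poly_expr_comm.
    + apply: poly_expr_conj BP.
      apply: (poly_expr_mono (k := i.+1 + j)); first by rewrite addSn.
      exact: poly_expr_comm.
  by move=> a ab; rewrite /fconj /fmul /fcomm AE // BE // /commutator; gnorm.
- have [D [DP DE]] := Dg b; exists D; split => //.
  exact: poly_expr_mono DP.
Qed.

Lemma poly_sh_expr k g : poly_expr k g -> poly_sh k g.
Proof.
elim/(nat_ind_down (d := d)): k g => [k dk | k _ IHk] g gP.
  by apply: poly_sh_unit => a; apply: (Gs_above dk); exact: poly_expr_val.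
apply: poly_sh_intro => [a | b]; first exact: poly_expr_val.
have [D [DP DE]] := poly_expr_derivative gP b.
by exists D; split => //; exact: IHk.
Qed.

Lemma poly_sh_mul k f g : poly_sh k f -> poly_sh k g -> poly_sh k (fmul f g).
Proof. by move=> fP gP; apply/poly_sh_expr/poly_expr_mul; exact: poly_expr_poly. Qed.

Lemma poly_sh_capU k g X c : poly_sh k g -> poly_sh k (fun a => g (fs_capU X c a)).
Proof.
elim/(nat_ind_down (d := d)): k g => [k dk | k _ IHk] g gP.
  by apply: poly_sh_unit => a; exact: poly_sh_above dk gP.
apply: poly_sh_intro => [a | b]; first exact: poly_sh_val.
have [D [DP DE]] := poly_sh_derivative gP (fs_filter (fun i => X i && ~~ fs_mem i c) b).
exists (fun a => D (fs_capU X c a)); split; first exact: IHk.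
by move=> a ab; rewrite DE ?fsU_capU //; exact: fs_capU_disjoint.
Qed.

Lemma poly_sh_factor k n v : poly_sh k.+1 v -> poly_sh k (fs_factor n v).
Proof.
elim/(nat_ind_down (d := d)): k v => [k dk | k _ IHk] v vP.
  apply: poly_sh_unit => a; rewrite /fs_factor; case: ifP => // _.
  exact: poly_sh_above (ltnW _) vP.
apply: poly_sh_intro => [a | b].
  rewrite /fs_factor; case: ifP => _; last exact: Gs1.
  exact: Gs_mono (leqnSn k) (poly_sh_val _ vP).
case nb: (fs_mem n b).
  exists (fun a => v (fs_capU (fun i => i < n) (fs_below n b) a)).
  split; first exact: poly_sh_capU.
  move=> a /fs_disjP ab; rewrite /fs_factor fs_memU nb orbT.
  have -> : fs_mem n a = false by apply/negP => /ab; rewrite nb.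
  by rewrite ginv1 gmul1 /fs_below fs_capU0_U.
have [D [DP DE]] := poly_sh_derivative vP (fs_filter (fun i => (i < n) && ~~ fs_mem i fs0) b).
exists (fs_factor n D); split; first exact: IHk.
move=> a ab; rewrite /fs_factor fs_memU nb orbF; case: ifP => _; last by rewrite gmulV.
by rewrite DE /fs_below ?fsU_capU //; exact: fs_capU_disjoint.
Qed.

Lemma poly_sh_of_truncations k g :
  (forall n, exists p, poly_sh k p /\ forall a, fs_le a n -> g a = p a) -> poly_sh k g.
Proof.
elim/(nat_ind_down (d := d)): k g => [k dk | k _ IHk] g gloc.
  apply: poly_sh_unit => a; have [p [pP pE]] := gloc (fs_max a).
  by rewrite pE ?fs_le_max //; exact: poly_sh_above dk pP.
apply: poly_sh_intro => [a | b].
  by have [p [pP pE]] := gloc (fs_max a); rewrite pE ?fs_le_max //; exact: poly_sh_val.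
pose X i := ~~ fs_mem i b.
have capX_disj a : fs_disjoint (fs_capU X fs0 a) b by exact: fs_disjoint_capC.
exists (fun a => (g (fs_capU X fs0 a))^-1 ** g (fsU (fs_capU X fs0 a) b)); split.
  apply: (IHk k.+1 (ltnSn k)) => n.
  have [p [pP pE]] := gloc (maxn n (fs_max b)).
  have [D [DP DE]] := poly_sh_derivative pP b.
  exists (fun a => D (fs_capU X fs0 a)); split; first exact: poly_sh_capU.
  move=> a an; have bm : fs_le b (maxn n (fs_max b)).
    by apply: fs_le_trans (fs_le_max b); exact: leq_maxr.
  have am : fs_le (fs_capU X fs0 a) (maxn n (fs_max b)).
    by apply: fs_le_capU => //; apply: fs_le_trans an; exact: leq_maxl.
  by rewrite /= DE // !pE // fs_leU.
by move=> a ab; rewrite fs_capC_id.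
Qed.

Lemma poly_sh_ordered_prod k u : (forall n, poly_sh k.+1 (u n)) -> poly_sh k (ordered_prod u).
Proof.
move=> uP; apply: poly_sh_of_truncations => n.
exists (gprod_down (fun n => fs_factor n (u n)) n); split.
  elim: n => [|n IHn] /=; first exact/poly_sh_const/Gs1.
  exact: poly_sh_mul (poly_sh_factor _ (uP _)) IHn.
move=> a an; rewrite /ordered_prod; symmetry.
by apply: gprod_down_factor_stable; [exact: fs_le_max | exact: fs_max_le].
Qed.

Lemma Gs_subgroup i : is_subgroup (Gs i).
Proof. by case: filtG => _ []. Qed.

Variable r : nat.

Definition tilde i := if i <= r then Gs r else Gs i.

Lemma tilde_sub i x : tilde i x -> Gs i x.
Proof. by rewrite /tilde; case: ifP => // ir; exact: Gs_mono. Qed.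

Lemma tilde_above i x : d < i -> tilde i x -> x = e.
Proof.
move=> di; rewrite /tilde; case: ifP => [ir | _]; last exact: Gs_above.
exact: Gs_above (leq_trans di ir).
Qed.

Lemma poly_tilde_sh k g : poly_sh k g -> (forall a, Gs r (g a)) ->
  poly (fun i => tilde (k + i)) g.
Proof.
elim/(nat_ind_down (d := d)): k g => [k dk | k _ IHk] g gP gr.
  apply: poly_triv => [x | a]; last exact: poly_sh_above dk gP.
  rewrite addn0; split=> [/(tilde_above dk) // | ->].
  by rewrite /tilde; case: ifP => _; exact: Gs1.
apply: poly_step => [a | b].
  by rewrite addn0 /tilde; case: ifP => _; [exact: gr | exact: poly_sh_val].
have [D [DP DE]] := poly_sh_derivative gP b.
(* [D] is only pinned down on sets disjoint from [b]; restricting its argument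
   away from [b] makes all of its values derivatives of [g], hence in [G_r]. *)
pose X i := ~~ fs_mem i b.
exists (fun a => D (fs_capU X fs0 a)); split.
  rewrite shift_succ; apply: (IHk k.+1 (ltnSn k)); first exact: poly_sh_capU.
  move=> a; rewrite DE; last exact: fs_disjoint_capC.
  by apply: Gs_mul; [apply: Gs_inv |]; exact: gr.
by move=> a ab; rewrite fs_capC_id //; exact: DE.
Qed.

Lemma poly_of_poly_tilde g : poly tilde g -> poly Gs g.
Proof. exact: poly_sh_of_poly 0 _ _ tilde_sub. Qed.

Lemma poly_tilde_val g a : poly tilde g -> Gs r (g a).
Proof. by move/(poly_val a); rewrite /tilde leq0n. Qed.

Variable Gam : G -> Prop.
Hypothesis Gam_subgroup : is_subgroup Gam.

Definition GrGam x := exists n y, Gs r n /\ Gam y /\ x = n ** y.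

Lemma GrGam_mul x y : GrGam x -> GrGam y -> GrGam (x ** y).
Proof.
move=> [n1 [y1 [n1r [y1Gam ->]]]] [n2 [y2 [n2r [y2Gam ->]]]].
exists (n1 ** (y1^-1^-1 ** n2 ** y1^-1)), (y1 ** y2); split.
  by apply: Gs_mul => //; exact: Gs_conj.
by case: Gam_subgroup => _ [mulGam _]; split; [exact: mulGam | gnorm].
Qed.

Lemma GrGam_inv x : GrGam x -> GrGam x^-1.
Proof.
move=> [n [y [nr [yGam ->]]]]; exists (y^-1 ** n^-1 ** y), y^-1; split.
  by apply/Gs_conj/Gs_inv.
by case: Gam_subgroup => _ [_ invGam]; split; [exact: invGam | gnorm].
Qed.

Definition correctable k := forall f, poly_sh k f -> (forall a, GrGam (f a)) ->
  exists rho, poly_sh k rho /\ (forall a, Gam (rho a)) /\ forall a, Gs r (f a ** rho a).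

Lemma correctable_ge k : r <= k -> correctable k.
Proof.
move=> rk f fP _; exists (fun _ => e); split; first exact/poly_sh_const/Gs1.
case: Gam_subgroup => Gam1 _; split=> // a.
by rewrite gmulg1; exact: Gs_mono rk (poly_sh_val _ fP).
Qed.

Lemma correctable_jump k f n : correctable k.+1 -> poly_sh k f -> (forall a, GrGam (f a)) ->
  exists rho, poly_sh k.+1 rho /\ (forall a, Gam (rho a)) /\
    forall a, fs_mem n a = false -> Gs r ((f a)^-1 ** f (fsU a (fs1 n)) ** rho a).
Proof.
move=> corrS fP fGG; have [D [DP DE]] := poly_sh_derivative fP (fs1 n).
pose X i := ~~ fs_mem i (fs1 n).
have DX a : D (fs_capU X fs0 a) =
    (f (fs_capU X fs0 a))^-1 ** f (fsU (fs_capU X fs0 a) (fs1 n)).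
  by apply: DE; exact: fs_disjoint_capC.
have DXG a : GrGam (D (fs_capU X fs0 a)).
  by rewrite DX; apply: GrGam_mul; [apply: GrGam_inv |]; exact: fGG.
have [rho [rhoP [rhoGam rhoE]]] := corrS _ (poly_sh_capU X fs0 DP) DXG.
exists rho; split=> //; split=> // a na.
by have := rhoE a; rewrite DX fs_capC_id //; exact: fs_disjoint1.
Qed.

Lemma correctable_step k : k <= r -> correctable k.+1 -> correctable k.
Proof.
move=> kr corrS f fP fGG.
have [u uP] := functional_choice _ (fun n => correctable_jump n corrS fP fGG).
have [n0 [y0 [n0r [y0Gam f0E]]]] := fGG fs0.
have [_ [mulGam invGam]] := Gam_subgroup.
exists (fmul (ordered_prod u) (fun _ => y0^-1)); split; [|split].
- apply: poly_sh_mul; first by apply: poly_sh_ordered_prod => n; case: (uP n).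
  apply: poly_sh_const; have -> : y0^-1 = (f fs0)^-1 ** n0 by rewrite f0E; gnorm.
  by apply: Gs_mul; [exact/Gs_inv/poly_sh_val | exact: Gs_mono kr n0r].
- move=> a; apply: mulGam (invGam _ y0Gam).
  by apply: ordered_prod_mem => // n b; case: (uP n) => _ [].
- move=> a; have -> : f a ** fmul (ordered_prod u) (fun _ => y0^-1) a =
      f a ** ordered_prod u a ** (f fs0)^-1 ** n0 by rewrite /fmul f0E; gnorm.
  apply: Gs_mul n0r; apply: ordered_prod_telescope (Gs_subgroup r) _ _ a.
    by move=> x y; exact: Gs_conj.
  by move=> n; case: (uP n) => _ [].
Qed.

Lemma correctable_all k : correctable k.
Proof.
elim/(nat_ind_down (d := r)): k => [k rk | k kr IHk]; first exact/correctable_ge/ltnW.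
exact/(correctable_step kr)/IHk.
Qed.

Definition Gam_r x := Gs r x /\ Gam x.

Lemma Gam_r_subgroup : is_subgroup Gam_r.
Proof.
have [Gr1 [mulGr invGr]] := Gs_subgroup r; have [Gam1 [mulGam invGam]] := Gam_subgroup.
split; first by [].
by split=> [x y [xr xGam] [yr yGam] | x [xr xGam]]; split; auto.
Qed.

Lemma coset_incl_Gam_r y : coset_incl Gam (coset Gam_r y) = coset Gam y.
Proof. by apply: coset_incl_coset => // [|l []]; case: Gam_r_subgroup. Qed.

Lemma poly_quot_incl hbar : poly_quot tilde Gam_r hbar ->
  poly_quot Gs Gam (fun a => coset_incl Gam (hbar a)) /\
  forall a, exists y, Gs r y /\ coset_incl Gam (hbar a) = coset Gam y.
Proof.
move=> [h [hP hE]]; split.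
  by exists h; split=> [|a]; [exact: poly_of_poly_tilde | rewrite hE coset_incl_Gam_r].
by move=> a; exists (h a); split; [exact: poly_tilde_val | rewrite hE coset_incl_Gam_r].
Qed.

Lemma poly_quot_incl_inj h1 h2 : poly_quot tilde Gam_r h1 -> poly_quot tilde Gam_r h2 ->
  (fun a => coset_incl Gam (h1 a)) = (fun a => coset_incl Gam (h2 a)) -> h1 = h2.
Proof.
move=> [g1 [g1P E1]] [g2 [g2P E2]] E12; apply: functional_extensionality => a.
have Gam12 : Gam ((g1 a)^-1 ** g2 a).
  apply: coset_inj; first by case: Gam_subgroup.
  by rewrite -!coset_incl_Gam_r -E1 -E2; exact: (congr1 (fun F => F a) E12).
have r12 : Gs r ((g1 a)^-1 ** g2 a).
  by apply: Gs_mul; [apply/Gs_inv/poly_tilde_val | exact: poly_tilde_val].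
by rewrite E1 E2 -[g2 a](gmulKVg (g1 a)) coset_mulr //; exact: Gam_r_subgroup.
Qed.

Lemma poly_quot_incl_surj fbar : poly_quot Gs Gam fbar ->
  (forall a, exists y, Gs r y /\ fbar a = coset Gam y) ->
  exists hbar, poly_quot tilde Gam_r hbar /\ (fun a => coset_incl Gam (hbar a)) = fbar.
Proof.
move=> [f [fP fE]] fGr.
have fGG a : GrGam (f a).
  have [y [yr Ey]] := fGr a.
  have [l [lGam ->]] : coset Gam y (f a).
    by rewrite -Ey fE; apply: coset_refl; case: Gam_subgroup.
  by exists y, l.
have [rho [rhoP [rhoGam rhoE]]] := correctable_all (k := 0) (f := f) fP fGG.
exists (fun a => coset Gam_r (fmul f rho a)); split.
  by exists (fmul f rho); split => //; exact: poly_tilde_sh (poly_sh_mul (k := 0) fP rhoP) rhoE.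
apply: functional_extensionality => a.
by rewrite coset_incl_Gam_r fE /fmul coset_mulr.
Qed.

End PolynomialMaps.

Theorem lemma5p2 (G : group) (opens : (G -> Prop) -> Prop)
  (Gs : nat -> G -> Prop) (Gam : G -> Prop) (d r : nat) :
  nilmanifold opens Gs Gam ->
  prefiltration_length Gs d ->
  r <= d ->
  let Gt := fun i => if i <= r then Gs r else Gs i in
  let Gamt := fun x => Gs r x /\ Gam x in
  let iota := coset_incl Gam in
  (forall hbar, poly_quot Gt Gamt hbar ->
     poly_quot Gs Gam (fun a => iota (hbar a)) /\
     forall a, exists g, Gs r g /\ iota (hbar a) = coset Gam g) /\
  (forall h1 h2, poly_quot Gt Gamt h1 -> poly_quot Gt Gamt h2 ->
     (fun a => iota (h1 a)) = (fun a => iota (h2 a)) -> h1 = h2) /\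
  (forall fbar, poly_quot Gs Gam fbar ->
     (forall a, exists g, Gs r g /\ fbar a = coset Gam g) ->
     exists hbar, poly_quot Gt Gamt hbar /\ (fun a => iota (hbar a)) = fbar).
Proof.
move=> [_ [filtG [Gam_subgroup _]]] [Gs_trivial _] _ /=.
split; first exact: (@poly_quot_incl _ _ _ filtG Gs_trivial r _ Gam_subgroup).
split; first exact: (@poly_quot_incl_inj _ _ filtG r _ Gam_subgroup).
exact: (@poly_quot_incl_surj _ _ _ filtG Gs_trivial r _ Gam_subgroup).
Qed.
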